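(* Let $(C_X,C_Z)$ be a GF(4) CSS code of length $n$ and distance $d$. Then $S'_X\perp S'_Z$, so $(S'_X,S'_Z)$ defines a CSS qubit code on $4n$ qubits, and its distance is at least $2d$.
   Context: $\mathrm{GF}(4)=\{0,1,\omega,\omega^2\}$ with $\omega^2=\omega+1$. A GF(4) CSS code of length $n$ is a pair of $\mathrm{GF}(4)$-linear subspaces $C_X,C_Z\subseteq\mathrm{GF}(4)^n$ with $\sum_ju_jv_j=0$ for all $u\in C_X$, $v\in C_Z$; with $C^\perp$ the Euclidean dual over GF(4) and $\mathrm{wt}$ the number of nonzero coordinates, $d_X=\min\{\mathrm{wt}(u):u\in C_Z^\perp\setminus C_X\}$, $d_Z=\min\{\mathrm{wt}(u):u\in C_X^\perp\setminus C_Z\}$, $d=\min(d_X,d_Z)$. Define $\mathbb F_2$-linear maps $\phi_X,\phi_Z:\mathrm{GF}(4)\to\mathbb F_2^4$ by $\phi_X(0)=0000$, $\phi_X(\omega)=1100$, $\phi_X(\omega^2)=1010$, $\phi_X(1)=0110$ and $\phi_Z(0)=0000$, $\phi_Z(\omega^2)=0011$, $\phi_Z(\omega)=0101$, $\phi_Z(1)=0110$ (binarization in the basis $\{\omega,\omega^2\}$ followed by encoding each qubit pair in the $[[4,2,2]]$ code). For $u\in\mathrm{GF}(4)^n$ let $\Phi_X(u)=(\phi_X(u_1),\dots,\phi_X(u_n))\in\mathbb F_2^{4n}$, similarly $\Phi_Z$. Let $B_j\in\mathbb F_2^{4n}$ be the all-ones indicator of the $j$-th block of 4 coordinates. Set $S'_X=\Phi_X(C_X)+\mathrm{span}\{B_1,\dots,B_n\}$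 and $S'_Z=\Phi_Z(C_Z)+\mathrm{span}\{B_1,\dots,B_n\}$ as the $X$- and $Z$-stabilizer spaces. The qubit code distance is $\min(d'_X,d'_Z)$ with $d'_X=\min\{|v|:v\in S_Z'^{\perp}\setminus S'_X\}$ and $d'_Z=\min\{|v|:v\in S_X'^{\perp}\setminus S'_Z\}$. *)

From HB Require Import structures.
From mathcomp Require Import all_boot all_order all_algebra.
Set Implicit Arguments. Unset Strict Implicit. Unset Printing Implicit Defensive.
Import GRing.Theory.
Local Open Scope ring_scope.

Inductive GF4 := G0 | G1 | Gw | Gw2.

Definition GF4_to (x : GF4) : 'I_4 :=
  match x with G0 => inord 0 | G1 => inord 1 | Gw => inord 2 | Gw2 => inord 3 end.
Definition GF4_of (i : 'I_4) : GF4 :=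
  match val i with 0 => G0 | 1 => G1 | 2 => Gw | _ => Gw2 end%N.
Lemma GF4_toK : cancel GF4_to GF4_of.
Proof. by case; rewrite /GF4_of /= inordK. Qed.
HB.instance Definition _ := Equality.copy GF4 (can_type GF4_toK).
HB.instance Definition _ := Finite.copy GF4 (can_type GF4_toK).

Definition add4 (x y : GF4) : GF4 :=
  match x, y with
  | G0, z | z, G0 => z
  | G1, G1 | Gw, Gw | Gw2, Gw2 => G0
  | G1, Gw | Gw, G1 => Gw2
  | G1, Gw2 | Gw2, G1 => Gw
  | Gw, Gw2 | Gw2, Gw => G1
  end.
Definition mul4 (x y : GF4) : GF4 :=
  match x, y with
  | G0, _ | _, G0 => G0
  | G1, z | z, G1 => z
  | Gw, Gw => Gw2
  | Gw2, Gw2 => Gw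
  | Gw, Gw2 | Gw2, Gw => G1
  end.
Definition inv4 (x : GF4) : GF4 :=
  match x with G0 => G0 | G1 => G1 | Gw => Gw2 | Gw2 => Gw end.

Fact add4A : associative add4. Proof. by move=> [] [] []. Qed.
Fact add4C : commutative add4. Proof. by move=> [] []. Qed.
Fact add40 : left_id G0 add4. Proof. by case. Qed.
Fact add4N : left_inverse G0 id add4. Proof. by case. Qed.
HB.instance Definition _ := GRing.isZmodule.Build GF4 add4A add4C add40 add4N.
Fact mul4A : associative mul4. Proof. by move=> [] [] []. Qed.
Fact mul4C : commutative mul4. Proof. by move=> [] []. Qed.
Fact mul41 : left_id G1 mul4. Proof. by case. Qed.
Fact mul4Dl : left_distributive mul4 add4. Proof. by move=> [] [] []. Qed.
Fact one4_neq0 : G1 != G0. Proof. by apply/eqP. Qed.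
HB.instance Definition _ :=
  GRing.Zmodule_isComNzRing.Build GF4 mul4A mul4C mul41 mul4Dl one4_neq0.
Fact mulV4 : forall x : GF4, x != 0 -> inv4 x * x = 1. Proof. by case=> //; rewrite eqxx. Qed.
Fact inv40 : inv4 0 = 0. Proof. by []. Qed.
HB.instance Definition _ := GRing.ComNzRing_isField.Build GF4 mulV4 inv40.

Definition gw : GF4 := Gw.
Lemma gw_sqr : gw ^+ 2 = gw + 1. Proof. by []. Qed.

Definition dot4 n (u v : 'rV[GF4]_n) : GF4 := \sum_(j < n) u 0 j * v 0 j.

Definition in_dual4 n (C : {vspace 'rV[GF4]_n}) (u : 'rV[GF4]_n) : Prop :=
  forall v, v \in C -> dot4 u v = 0.

Definition wt4 n (u : 'rV[GF4]_n) : nat := #|[set j : 'I_n | u 0 j != 0]|.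

Notation qvec n := {ffun 'I_n * 'I_4 -> 'F_2}.

Definition dot2 n (v w : qvec n) : 'F_2 := \sum_(i : 'I_n * 'I_4) v i * w i.
Definition wt2 n (v : qvec n) : nat := #|[set i | v i != 0]|.

Definition bits4 (b0 b1 b2 b3 : 'F_2) : 'I_4 -> 'F_2 :=
  fun a => match val a with 0 => b0 | 1 => b1 | 2 => b2 | _ => b3 end%N.

Definition phiX (x : GF4) : 'I_4 -> 'F_2 :=
  match x with
  | G0 => bits4 0 0 0 0
  | Gw => bits4 1 1 0 0
  | Gw2 => bits4 1 0 1 0
  | G1 => bits4 0 1 1 0
  end.
Definition phiZ (x : GF4) : 'I_4 -> 'F_2 :=
  match x with
  | G0 => bits4 0 0 0 0
  | Gw2 => bits4 0 0 1 1
  | Gw => bits4 0 1 0 1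
  | G1 => bits4 0 1 1 0
  end.

Definition PhiX n (u : 'rV[GF4]_n) : qvec n := [ffun i => phiX (u 0 i.1) i.2].
Definition PhiZ n (u : 'rV[GF4]_n) : qvec n := [ffun i => phiZ (u 0 i.1) i.2].

Definition Bblk n (j : 'I_n) : qvec n := [ffun i => if i.1 == j then 1 else 0].

Definition in_Sprime n (Phi : 'rV[GF4]_n -> qvec n) (C : {vspace 'rV[GF4]_n})
    (v : qvec n) : Prop :=
  exists u, exists c : 'I_n -> 'F_2,
    u \in C /\ v = Phi u + \sum_(j < n) [ffun i => c j * Bblk j i].

Definition in_SXp n (CX : {vspace 'rV[GF4]_n}) := in_Sprime (@PhiX n) CX.
Definition in_SZp n (CZ : {vspace 'rV[GF4]_n}) := in_Sprime (@PhiZ n) CZ.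

Definition in_dual2 n (S : qvec n -> Prop) (v : qvec n) : Prop :=
  forall w, S w -> dot2 v w = 0.

From HB Require Import structures.
From mathcomp Require Import all_boot all_order all_algebra.
Set Implicit Arguments. Unset Strict Implicit.
Import GRing.Theory.
Local Open Scope ring_scope.

(* Everything is decided blockwise. Writing a block of S'_X as phi_X(a) + c*1111 and a block of
   S'_Z as phi_Z(b) + c'*1111, their binary inner product is the trace tr(ab) of GF(4) over F_2,
   so S'_X . S'_Z reduces to tr(C_X . C_Z) = 0.  Conversely, a word v orthogonal to S'_Z is
   orthogonal to every B_j, so each of its blocks has even weight and therefore is of the form
   phi_X(a_j) + c_j*1111; orthogonality to Phi_Z(l C_Z) for all l in GF(4) and the
   nondegeneracy of the trace form put u = (a_j)_j in C_Z^perp, while v not in S'_X forces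
   u not in C_X.  Hence wt(u) >= d, and each block with a_j <> 0 has weight at least 2. *)

Lemma F2_cases (x : 'F_2) : x = 0 \/ x = 1.
Proof. by case: x => [[|[|m]] Hm]; [left|right|]; [apply/val_inj..|]. Qed.

(* The absolute trace x + x^2 of GF(4) over F_2. *)
Definition tr4 (x : GF4) : 'F_2 := match x with G0 | G1 => 0 | _ => 1 end.

Lemma tr4D : {morph tr4 : x y / x + y}.
Proof. by move=> [] []; apply/eqP. Qed.

Lemma tr4_sum n (f : 'I_n -> GF4) : tr4 (\sum_j f j) = \sum_j tr4 (f j).
Proof. exact: (big_morph tr4 tr4D). Qed.

Lemma tr4_nondeg x : (forall l, tr4 (l * x) = 0) -> x = 0.
Proof. by move=> tr0; move: (tr0 1) (tr0 gw); clear tr0; case: x => //; move/eqP. Qed.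

Lemma bits4E (x : 'I_4 -> 'F_2) k :
  x k = bits4 (x (inord 0)) (x (inord 1)) (x (inord 2)) (x (inord 3)) k.
Proof. by case: k => [[|[|[|[|m]]]] Hk] //=; congr x; apply/val_inj; rewrite /= inordK. Qed.

Lemma sum4E (x : 'I_4 -> 'F_2) :
  \sum_(k < 4) x k = x (inord 0) + x (inord 1) + x (inord 2) + x (inord 3).
Proof. by rewrite (eq_bigr _ (fun k _ => bits4E x k)) !big_ord_recr big_ord0 /= add0r. Qed.

(* All images of phi_X and phi_Z have even weight, so the 1111 components drop out and what
   remains is the [[4,2,2]] identity phi_X(a) . phi_Z(b) = tr(ab). *)
Lemma phiXZ_dot a b (c c' : 'F_2) :
  \sum_(k < 4) (phiX a k + c) * (phiZ b k + c') = tr4 (a * b).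
Proof.
by case: (F2_cases c) => ->; case: (F2_cases c') => ->; case: a; case: b;
  rewrite !big_ord_recr big_ord0 /=; apply/eqP.
Qed.

Lemma phiZX_dot a b (c c' : 'F_2) :
  \sum_(k < 4) (phiZ a k + c) * (phiX b k + c') = tr4 (a * b).
Proof.
by rewrite mulrC -(phiXZ_dot b a c' c); apply: eq_bigr => k _; rewrite mulrC.
Qed.

Lemma phiX0 : phiX 0 =1 fun=> 0. Proof. by case=> [[|[|[|[|m]]]] Hk]. Qed.
Lemma phiZ0 : phiZ 0 =1 fun=> 0. Proof. by case=> [[|[|[|[|m]]]] Hk]. Qed.

Lemma phiX_wt a (c : 'F_2) : a != 0 -> (2 <= \sum_(k < 4) ((phiX a k + c)%R != 0%R))%N.
Proof.
by case: (F2_cases c) => ->; case: a; rewrite ?eqxx // => _; rewrite !big_ord_recr big_ord0.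
Qed.

Lemma phiZ_wt a (c : 'F_2) : a != 0 -> (2 <= \sum_(k < 4) ((phiZ a k + c)%R != 0%R))%N.
Proof.
by case: (F2_cases c) => ->; case: a; rewrite ?eqxx // => _; rewrite !big_ord_recr big_ord0.
Qed.

Lemma phiX_even (x : 'I_4 -> 'F_2) : \sum_k x k = 0 ->
  {ac : GF4 * 'F_2 | forall k, x k = phiX ac.1 k + ac.2}.
Proof.
rewrite sum4E; move: (bits4E x).
set b0 := x _; set b1 := x _; set b2 := x _; set b3 := x _ => xE even.
exists (if b0 + b3 == 0 then (if b1 + b3 == 0 then G0 else G1)
        else (if b1 + b3 == 0 then Gw2 else Gw), b3) => k /=.
rewrite xE; move: b0 b1 b2 b3 even {xE} => b0 b1 b2 b3.
case: (F2_cases b0) => ->; case: (F2_cases b1) => ->;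
case: (F2_cases b2) => ->; case: (F2_cases b3) => -> even; move/eqP: even => // _;
by case: k => [[|[|[|[|m]]]] Hk] //=; apply/eqP.
Qed.

Lemma phiZ_even (x : 'I_4 -> 'F_2) : \sum_k x k = 0 ->
  {ac : GF4 * 'F_2 | forall k, x k = phiZ ac.1 k + ac.2}.
Proof.
rewrite sum4E; move: (bits4E x).
set b0 := x _; set b1 := x _; set b2 := x _; set b3 := x _ => xE even.
exists (if b1 + b0 == 0 then (if b2 + b0 == 0 then G0 else Gw2)
        else (if b2 + b0 == 0 then Gw else G1), b0) => k /=.
rewrite xE; move: b0 b1 b2 b3 even {xE} => b0 b1 b2 b3.
case: (F2_cases b0) => ->; case: (F2_cases b1) => ->;
case: (F2_cases b2) => ->; case: (F2_cases b3) => -> even; move/eqP: even => // _;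
by case: k => [[|[|[|[|m]]]] Hk] //=; apply/eqP.
Qed.

Lemma sum_Bblk n (c : 'I_n -> 'F_2) i :
  (\sum_(j < n) [ffun i => c j * Bblk j i]) i = c i.1.
Proof.
rewrite sum_ffunE (bigD1 i.1) //= !ffunE eqxx mulr1 big1 ?addr0 // => j ji.
by rewrite !ffunE eq_sym (negbTE ji) mulr0.
Qed.

Lemma dot2E n (v w : qvec n) :
  dot2 v w = \sum_(j < n) \sum_(k < 4) v (j, k) * w (j, k).
Proof. by rewrite /dot2 pair_bigA; apply: eq_bigr => -[]. Qed.

Lemma wt2E n (v : qvec n) :
  wt2 v = (\sum_(j < n) \sum_(k < 4) (v (j, k) != 0%R))%N.
Proof.
rewrite /wt2 -sum1dep_card pair_bigA big_mkcond /=.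
by apply: eq_bigr => -[j k] _; case: eqP.
Qed.

Lemma wt4E n (u : 'rV[GF4]_n) : wt4 u = (\sum_(j < n) (u 0%R j != 0%R))%N.
Proof. by rewrite /wt4 -sum1dep_card big_mkcond /=; apply: eq_bigr => j _; case: eqP. Qed.

Definition blockPhi (phi : GF4 -> 'I_4 -> 'F_2) n (u : 'rV[GF4]_n) : qvec n :=
  [ffun i => phi (u 0 i.1) i.2].

Definition block_word (phi : GF4 -> 'I_4 -> 'F_2) n (u : 'rV[GF4]_n)
    (c : 'I_n -> 'F_2) : qvec n :=
  [ffun i => phi (u 0 i.1) i.2 + c i.1].

Lemma in_SprimeP phi n (C : {vspace 'rV[GF4]_n}) v :
  in_Sprime (@blockPhi phi n) C v <-> exists u c, u \in C /\ v = block_word phi u c.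
Proof.
have blockE u c : blockPhi phi u + \sum_j [ffun i => c j * Bblk j i] = block_word phi u c.
  by apply/ffunP => i; rewrite !ffunE sum_Bblk.
by split=> -[u [c [Cu ->]]]; exists u, c; rewrite blockE.
Qed.

Section BlockEncoding.

Variables phi psi : GF4 -> 'I_4 -> 'F_2.

Hypothesis phi_psi_dot : forall a b c c',
  \sum_(k < 4) (phi a k + c) * (psi b k + c') = tr4 (a * b).

Lemma dot2_block_word n (u u' : 'rV[GF4]_n) c c' :
  dot2 (block_word phi u c) (block_word psi u' c') = tr4 (dot4 u u').
Proof.
rewrite dot2E /dot4 tr4_sum; apply: eq_bigr => j _.
by rewrite -(phi_psi_dot _ _ (c j) (c' j)); apply: eq_bigr => k _; rewrite !ffunE.
Qed.

Lemma Sprime_orthogonal n (C1 C2 : {vspace 'rV[GF4]_n}) v w :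
  (forall u u', u \in C1 -> u' \in C2 -> dot4 u u' = 0) ->
  in_Sprime (@blockPhi phi n) C1 v -> in_Sprime (@blockPhi psi n) C2 w -> dot2 v w = 0.
Proof.
move=> C12 /in_SprimeP[u [c [C1u ->]]] /in_SprimeP[u' [c' [C2u' ->]]].
by rewrite dot2_block_word C12.
Qed.

Hypothesis psi0 : psi 0 =1 fun=> 0.

Hypothesis phi_even : forall x : 'I_4 -> 'F_2, \sum_k x k = 0 ->
  {ac : GF4 * 'F_2 | forall k, x k = phi ac.1 k + ac.2}.

Hypothesis phi_wt : forall a (c : 'F_2), a != 0 ->
  (2 <= \sum_(k < 4) ((phi a k + c)%R != 0%R))%N.

Lemma Bblk_in_Sprime n (C : {vspace 'rV[GF4]_n}) j :
  in_Sprime (@blockPhi psi n) C (Bblk j).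
Proof.
apply/in_SprimeP; exists 0, (fun j' => if j' == j then 1 else 0).
by split; [exact: mem0v | apply/ffunP => i; rewrite !ffunE mxE psi0 add0r].
Qed.

Lemma dual_Sprime_block_even n (C : {vspace 'rV[GF4]_n}) v j :
  in_dual2 (in_Sprime (@blockPhi psi n) C) v -> \sum_(k < 4) v (j, k) = 0.
Proof.
move=> /(_ _ (Bblk_in_Sprime C j)); rewrite dot2E (bigD1 j) //= [X in _ + X]big1 ?addr0.
  by move=> dotv; rewrite -[RHS]dotv; apply: eq_bigr => k _; rewrite ffunE eqxx mulr1.
by move=> j' j'j; apply: big1 => k _; rewrite ffunE (negbTE j'j) mulr0.
Qed.

Lemma even_blocks_block_word n (v : qvec n) :
  (forall j, \sum_(k < 4) v (j, k) = 0) -> exists u c, v = block_word phi u c.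
Proof.
move=> even; pose ac j := sval (phi_even (even j)).
exists (\row_j (ac j).1), (fun j => (ac j).2).
by apply/ffunP => -[j k]; rewrite ffunE mxE /=; apply: (svalP (phi_even (even j))).
Qed.

Lemma dual_Sprime_block_word n (C : {vspace 'rV[GF4]_n}) u c :
  in_dual2 (in_Sprime (@blockPhi psi n) C) (block_word phi u c) -> in_dual4 C u.
Proof.
move=> dual w Cw; apply: tr4_nondeg => l.
have Slw : in_Sprime (@blockPhi psi n) C (block_word psi (l *: w) (fun=> 0)).
  by apply/in_SprimeP; exists (l *: w), (fun=> 0); rewrite memvZ.
rewrite -(dual _ Slw) dot2_block_word /dot4 mulr_sumr; congr tr4.
by apply: eq_bigr => j _; rewrite !mxE mulrCA.
Qed.

Lemma wt2_block_word n (u : 'rV[GF4]_n) c : (2 * wt4 u <= wt2 (block_word phi u c))%N.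
Proof.
rewrite wt2E wt4E big_distrr /=; apply: leq_sum => j _.
have [u0|_] := boolP (u 0 j != 0); last by rewrite muln0.
rewrite muln1 (leq_trans (phi_wt (c j) u0)) //.
by apply: eq_leq; apply: eq_bigr => k _; rewrite ffunE.
Qed.

Lemma Sprime_dual_wt n d (C1 C2 : {vspace 'rV[GF4]_n}) v :
  (forall u, in_dual4 C2 u -> u \notin C1 -> (d <= wt4 u)%N) ->
  in_dual2 (in_Sprime (@blockPhi psi n) C2) v ->
  ~ in_Sprime (@blockPhi phi n) C1 v -> (2 * d <= wt2 v)%N.
Proof.
move=> dist dual notS.
have [u [c vE]] := even_blocks_block_word (fun j => dual_Sprime_block_even j dual).
rewrite {}vE in dual notS *.
have C1'u : u \notin C1.
  by apply/negP => C1u; apply: notS; apply/in_SprimeP; exists u, c.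
apply: leq_trans (wt2_block_word u c).
by rewrite leq_mul2l dist ?orbT //; apply: dual_Sprime_block_word dual.
Qed.

End BlockEncoding.

Theorem mainTheorem15 (n d : nat) (CX CZ : {vspace 'rV[GF4]_n}) :
  (forall u v, u \in CX -> v \in CZ -> dot4 u v = 0) ->
  (forall u, in_dual4 CZ u -> u \notin CX -> (d <= wt4 u)%N) ->
  (forall u, in_dual4 CX u -> u \notin CZ -> (d <= wt4 u)%N) ->
  (forall v w, in_SXp CX v -> in_SZp CZ w -> dot2 v w = 0)
  /\
  (forall v, in_dual2 (in_SZp CZ) v -> ~ in_SXp CX v -> (2 * d <= wt2 v)%N)
  /\
  (forall v, in_dual2 (in_SXp CX) v -> ~ in_SZp CZ v -> (2 * d <= wt2 v)%N).
Proof.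
move=> orthXZ distX distZ; split; [|split].
- move=> v w; exact: (Sprime_orthogonal phiXZ_dot orthXZ (v:=v) (w:=w)).
- move=> v; exact: (Sprime_dual_wt phiXZ_dot phiZ0 phiX_even phiX_wt distX (v:=v)).
- move=> v; exact: (Sprime_dual_wt phiZX_dot phiX0 phiZ_even phiZ_wt distZ (v:=v)).
Qed.
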